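(* If a normal mode transformation exists, then $\bm{\Omega}$ is positive definite.
   Context: Fix an integer $N\ge 1$, real numbers $v$ with $|v|<1$, $L>0$, $L_{\star}\ge 0$, an integer $M\ge 1$ and real coefficients $c_{1}=1,c_{2},\dots,c_{M}$. Let $F(k)=\sum_{i=1}^{M}(-1)^{i-1}c_{i}L_{\star}^{2i-2}k^{2i-1}$ and $k_{n}=n\pi/L$, and assume $F(k_{n})^{2}\neq v^{2}k_{n}^{2}$ for $n=1,\dots,N$. Put $u_{n}=\sqrt{|F(k_{n})^{2}-v^{2}k_{n}^{2}|}/k_{n}>0$, and $\varepsilon_{n}=1$ if $F(k_{n})^{2}-v^{2}k_{n}^{2}>0$, $\varepsilon_{n}=0$ otherwise. Define $N\times N$ matrices $\bm\sigma,\bm\rho,\bm\xi$ by $\sigma_{nn}=0$, $\sigma_{nm}=\dfrac{2iv\sqrt{nm}\,[1-(-1)^{n+m}]}{\pi\sqrt{u_{n}u_{m}}\,(m^{2}-n^{2})}$ for $n\neq m$, $\bm\rho=\mathrm{diag}(n u_{n}\varepsilon_{n})$, $\bm\xi=\mathrm{diag}(-n u_{n}(1-\varepsilon_{n}))$. With $\mathbf{I}$ the $N\times N$ identity, define the $2N\times 2N$ matrices $\bm{\Sigma}=\begin{pmatrix}\mathbf{I}&\mathbf{0}\\ \mathbf{0}&-\mathbf{I}\end{pmatrix}$, $\bm{\Gamma}=\begin{pmatrix}\mathbf{0}&\mathbf{I}\\ \mathbf{I}&\mathbf{0}\end{pmatrix}$, $\mathbf{R}=\bm{\Sigma}-\begin{pmatrix}\bm\sigma&\bm\sigma\\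 \bm\sigma&\bm\sigma\end{pmatrix}$, $\bm{\Omega}=\begin{pmatrix}\bm\rho&\bm\xi\\ \bm\xi&\bm\rho\end{pmatrix}$. Standing assumption: $\mathbf{R}$ is invertible. Let $\mathbf{D}=\mathbf{R}^{-1}\bm{\Omega}$. Here ${}^{*}$ denotes entrywise complex conjugation and ${}^{\mathrm{H}}$ the conjugate transpose. A normal mode transformation is a $2N\times2N$ matrix $\mathbf{T}$ such that (i) $\mathbf{T}^{\mathrm{H}}\mathbf{R}\mathbf{T}=\bm{\Sigma}$; (ii) $\mathbf{T}=\bm{\Gamma}\mathbf{T}^{*}\bm{\Gamma}$; (iii) $\mathbf{T}^{-1}\mathbf{D}\mathbf{T}=\mathrm{diag}(\mu_{1},\dots,\mu_{N},-\mu_{1},\dots,-\mu_{N})$ for some real numbers $\mu_{n}>0$, where $\mathbf{T}^{-1}=\bm{\Sigma}\mathbf{T}^{\mathrm{H}}\mathbf{R}$. *)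

From HB Require Import structures.
From mathcomp Require Import all_boot all_order all_algebra.
From mathcomp Require Import complex.
From mathcomp Require Import reals trigo.
Set Implicit Arguments. Unset Strict Implicit. Unset Printing Implicit Defensive.
Import Order.TTheory GRing.Theory Num.Theory.
Local Open Scope ring_scope.
Local Open Scope complex_scope.

Section Model.
Variable R : realType.
Local Notation C := R[i].

Variables (v L Lstar : R) (M : nat) (c : nat -> R) (N : nat).

Definition kn (n : nat) : R := n%:R * pi / L.

Definition Fk (k : R) : R :=
  \sum_(1 <= i < M.+1) (-1) ^+ (i.-1) * c i * Lstar ^+ (2 * i - 2) * k ^+ (2 * i - 1).

Definition disc (n : nat) : R := Fk (kn n) ^+ 2 - v ^+ 2 * kn n ^+ 2.

Definition un (n : nat) : R := Num.sqrt `|disc n| / kn n.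

Definition epsn (n : nat) : R := if 0 < disc n then 1 else 0.

(* Indices n = 1..N are represented by i : 'I_N with n = i.+1. *)
Definition sigma_mx : 'M[C]_N :=
  \matrix_(i < N, j < N)
    if i == j then 0 else
    let n := i.+1 in let m := j.+1 in
    ((2 * v * Num.sqrt (n%:R * m%:R) * (1 - (-1) ^+ (n + m))
       / (pi * Num.sqrt (un n * un m) * (m%:R ^+ 2 - n%:R ^+ 2)))%:C) * 'i.

Definition rho_mx : 'M[C]_N :=
  \matrix_(i < N, j < N) if i == j then ((i.+1)%:R * un i.+1 * epsn i.+1)%:C else 0.

Definition xi_mx : 'M[C]_N :=
  \matrix_(i < N, j < N)
    if i == j then (- ((i.+1)%:R * un i.+1 * (1 - epsn i.+1)))%:C else 0.

Definition Sigma_mx : 'M[C]_(N + N) := block_mx 1%:M 0 0 (- 1%:M).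
Definition Gamma_mx : 'M[C]_(N + N) := block_mx 0 1%:M 1%:M 0.
Definition R_mx : 'M[C]_(N + N) :=
  Sigma_mx - block_mx sigma_mx sigma_mx sigma_mx sigma_mx.
Definition Omega_mx : 'M[C]_(N + N) := block_mx rho_mx xi_mx xi_mx rho_mx.
Definition D_mx : 'M[C]_(N + N) := invmx R_mx *m Omega_mx.

End Model.

Definition conjmx (C : numClosedFieldType) (m n : nat) (A : 'M[C]_(m, n)) : 'M[C]_(m, n) :=
  map_mx Num.conj A.
Definition adjmx (C : numClosedFieldType) (m n : nat) (A : 'M[C]_(m, n)) : 'M[C]_(n, m) :=
  (conjmx A)^T.

Definition posdef (C : numClosedFieldType) (n : nat) (A : 'M[C]_n) : Prop :=
  forall x : 'cV[C]_n, x != 0 -> 0 < (adjmx x *m A *m x) 0 0.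

Definition diag_pm (R : realType) (N : nat) (mu : 'I_N -> R) : 'M[R[i]]_(N + N) :=
  block_mx (diag_mx (\row_j (mu j)%:C)) 0 0 (diag_mx (\row_j (- mu j)%:C)).

Definition is_NMT (R : realType) (v L Lstar : R) (M : nat) (c : nat -> R) (N : nat)
    (T : 'M[R[i]]_(N + N)) : Prop :=
  let Rm := R_mx v L Lstar M c N in
  [/\ adjmx T *m Rm *m T = Sigma_mx R N,
      T = Gamma_mx R N *m conjmx T *m Gamma_mx R N &
      exists mu : 'I_N -> R, (forall j, 0 < mu j) /\
        (Sigma_mx R N *m adjmx T *m Rm) *m D_mx v L Lstar M c N *m T = diag_pm mu].

(** Condition (i) makes [T] invertible (as [Sigma] is), and multiplying (iii)
    on the left by [Sigma = Sigma^-1] gives [T^H Omega T = T^H R D T =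
    Sigma diag(mu, -mu) = diag(mu, mu)].  So [Omega] is congruent to a
    diagonal matrix with positive entries, hence positive definite. *)
From HB Require Import structures.
From mathcomp Require Import all_boot all_order all_algebra.
From mathcomp Require Import complex.
From mathcomp Require Import reals.
From mathcomp Require Import ring.
Set Implicit Arguments. Unset Strict Implicit. Unset Printing Implicit Defensive.
Import Order.TTheory GRing.Theory Num.Theory.
Local Open Scope ring_scope.
Local Open Scope complex_scope.

Section Adjoint.
Variable C : numClosedFieldType.

Lemma adjmxM m n p (A : 'M[C]_(m, n)) (B : 'M[C]_(n, p)) :
  adjmx (A *m B) = adjmx B *m adjmx A.
Proof. by rewrite /adjmx /conjmx -trmx_mul; congr trmx; apply: map_mxM. Qed.

Lemma posdef_diag n (d : 'rV[C]_n) :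
  (forall k, 0 < d 0 k) -> posdef (diag_mx d).
Proof.
move=> d_gt0 y y_neq0.
have [k0 yk0_neq0] : exists k, y k 0 != 0.
  apply/existsP; apply: contraR y_neq0; rewrite negb_exists => /forallP y0.
  by apply/eqP/matrixP => i j; rewrite (ord1 j) !mxE; apply/eqP; have := y0 i; rewrite negbK.
have termE k : (adjmx y *m diag_mx d) 0 k * y k 0 = d 0 k * `|y k 0| ^+ 2.
  by rewrite mul_mx_diag !mxE normCK; ring.
rewrite mxE (eq_bigr _ (fun k _ => termE k)) (bigD1 k0) //=.
apply: ltr_pwDl; first by rewrite mulr_gt0 // exprn_gt0 // normr_gt0.
by apply: sumr_ge0 => k _; rewrite mulr_ge0 ?exprn_ge0 // ltW.
Qed.

Lemma posdef_congr n (A T : 'M[C]_n) :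
  T \in unitmx -> posdef (adjmx T *m A *m T) -> posdef A.
Proof.
move=> T_unit congr_pd x x_neq0.
have xE : x = T *m (invmx T *m x) by rewrite mulmxA mulmxV // mul1mx.
have y_neq0 : invmx T *m x != 0.
  by apply: contraNneq x_neq0 => y0; rewrite xE y0 mulmx0.
rewrite xE adjmxM.
have := congr_pd _ y_neq0.
by rewrite !mulmxA.
Qed.

End Adjoint.

Section SigmaDiag.
Variables (R : realType) (N : nat).

Lemma Sigma_mxK : Sigma_mx R N *m Sigma_mx R N = 1%:M.
Proof.
rewrite /Sigma_mx mulmx_block !mulmx0 !mul0mx !mul1mx !addr0 !add0r.
by rewrite mulmxN mulNmx opprK mul1mx -scalar_mx_block.
Qed.

Lemma Sigma_diag_pm (mu : 'I_N -> R) :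
  Sigma_mx R N *m diag_pm mu =
  diag_mx (row_mx (\row_j (mu j)%:C) (\row_j (mu j)%:C)).
Proof.
rewrite /Sigma_mx /diag_pm mulmx_block !mulmx0 !mul0mx !mul1mx !addr0 !add0r.
rewrite diag_mx_row mulNmx mul1mx; congr block_mx.
apply/matrixP => i j; rewrite !mxE; case: (i == j); rewrite ?mulr1n ?mulr0n ?oppr0 //.
by apply/eqP; rewrite eq_complex /= opprK oppr0 !eqxx.
Qed.

End SigmaDiag.

Theorem lemma5 (R : realType) (N : nat) (v L Lstar : R) (M : nat) (c : nat -> R) :
  (1 <= N)%N -> `|v| < 1 -> 0 < L -> 0 <= Lstar -> (1 <= M)%N -> c 1%N = 1 ->
  (forall n : nat, (1 <= n <= N)%N ->
     Fk Lstar M c (kn L n) ^+ 2 != v ^+ 2 * kn L n ^+ 2) ->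
  R_mx v L Lstar M c N \in unitmx ->
  (exists T : 'M[R[i]]_(N + N), is_NMT v L Lstar M c T) ->
  posdef (Omega_mx v L Lstar M c N).
Proof.
move=> _ _ _ _ _ _ _ R_unit [T [TRT_Sigma _ [mu [mu_gt0 diagonalized]]]].
set Rm := R_mx v L Lstar M c N in R_unit TRT_Sigma diagonalized.
set S := Sigma_mx R N in TRT_Sigma diagonalized.
have T_unit : T \in unitmx.
  have S_unit : S \in unitmx by case: (mulmx1_unit (@Sigma_mxK R N)).
  by move: S_unit; rewrite -TRT_Sigma !unitmx_mul => /andP[/andP[_ _] ->].
have TOmegaT : adjmx T *m Omega_mx v L Lstar M c N *m T = S *m diag_pm mu.
  rewrite -diagonalized /D_mx -!mulmxA (mulmxA Rm) mulmxV // mul1mx.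
  by rewrite !mulmxA Sigma_mxK mul1mx.
apply: (posdef_congr T_unit).
rewrite TOmegaT Sigma_diag_pm.
by apply: posdef_diag => k; rewrite mxE; case: splitP => j _; rewrite mxE ltcR.
Qed.
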